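(* Let $1\le j<n$ with $\gcd(n,j)=1$ and $k=n-j$. Let $\phi$ be the Drinfeld module over $L$ with $\phi_T=-\tau^n+g\tau^j+1$ ($g\in L$), and let $\lambda=\tau^k-a$ with $a\in L^\times$. Then there exists a Drinfeld $A$-module $\psi$ of characteristic $T-1$ over $L$ such that $\lambda$ is an isogeny from $\phi$ to $\psi$ if and only if $$\frac{1}{a}\,g^{q^k}-\frac{1}{a^{q^j}}\,g-a^{q^n-1}+1=0 .$$ In that case $\psi_T=-\tau^n+h\tau^j+1$ with $h=-a^{q^n}+a+g^{q^k}$.
   Context: $q$ is a prime power, $A=\mathbb{F}_q[T]$, $L$ is a field containing $\mathbb{F}_q$ with an $\mathbb{F}_q$-algebra homomorphism $\iota:A\to L$ whose kernel is $(T-1)$ (so $\iota(T)=1$). $L\{\tau\}$ is the twisted polynomial ring of additive polynomials over $L$, with $\tau$ the $q$-Frobenius, so $\tau c=c^q\tau$ for $c\in L$; for $f=a_0+a_1\tau+\dots$ set $D(f)=a_0$. A Drinfeld $A$-module of characteristic $T-1$ over $L$ is an $\mathbb{F}_q$-algebra homomorphism $\phi:A\to L\{\tau\}$, $a\mapsto\phi_a$, with $D\circ\phi=\iota$ and $\phi_a\ne\iota(a)$ for some $a$; it is determined by $\phi_T$. An isogeny $\lambda:\phi\to\psi$ over $L$ is $\lambda\in L\{\tau\}$ with $\lambda\phi_a=\psi_a\lambda$ for all $a\in A$ (equivalently for $a=T$). *)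

From HB Require Import structures.
From mathcomp Require Import all_boot all_order all_algebra.
Set Implicit Arguments. Unset Strict Implicit. Unset Printing Implicit Defensive.
Import GRing.Theory.
Local Open Scope ring_scope.

(* The twisted polynomial ring L{tau} (tau = q-Frobenius, tau c = c^q tau).
   An element  f = a_0 + a_1 tau + ... + a_m tau^m  is represented by the
   coefficient polynomial  a_0 + a_1 X + ... + a_m X^m : {poly L}.
   Addition, zero, scalars c = c%:P and tau^n = 'X^n are the usual ones;
   the (non-commutative) product is the twisted product below:
     (f * g)_n = \sum_{i+l=n} f_i * (g_l)^(q^i). *)
Definition skew_mul (L : fieldType) (q : nat) (f g : {poly L}) : {poly L} :=
  \poly_(n < size f + size g)
     \sum_(i < n.+1) f`_i * (g`_(n - i)) ^+ (q ^ i).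

Definition skewD (L : fieldType) (f : {poly L}) : L := f`_0.

(* F_q is contained in L: X^q - X has q distinct roots in L. *)
Definition contains_Fq (L : fieldType) (q : nat) : Prop :=
  exists s : seq L, [/\ uniq s, size s = q & all (fun x => x ^+ q == x) s].

Definition char_prime_power (L : fieldType) (q : nat) : Prop :=
  exists p e : nat, [/\ prime p, p \in [pchar L], (0 < e)%N & q = (p ^ e)%N].

(* A Drinfeld A-module (A = F_q[T]) of characteristic T-1 over L, given by
   phi_T (an F_q-algebra hom A -> L{tau} is determined by phi_T).
   Conditions: D(phi_T) = iota(T) = 1, and phi_a <> iota(a) for some a,
   which is equivalent to phi_T <> 1. *)
Definition drinfeld_T (L : fieldType) (phiT : {poly L}) : Prop :=
  skewD phiT = 1 /\ phiT <> 1.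

Definition isogeny (L : fieldType) (q : nat) (phiT psiT lam : {poly L}) : Prop :=
  skew_mul q lam phiT = skew_mul q psiT lam.

From HB Require Import structures.
From mathcomp Require Import all_boot all_order all_algebra.
From mathcomp Require Import zify ring.
Import GRing.Theory.
Local Open Scope ring_scope.

(* Proof of Proposition 4.1.  Write n = j + k, lam = tau^k - a and, for y in L,
   phi(y) = -tau^n + y tau^j + 1, so that phi_T = phi(g).
   1. Since q is a power of char L, x |-> x^(q^i) is additive; hence the twisted
      product on L{tau} is biadditive, and on monomials it is
      (c tau^i)(d tau^l) = c d^(q^i) tau^(i+l).
   2. Expanding both products monomial by monomial gives, for
      h = -a^(q^n) + a + g^(q^k) and e = a g - h a^(q^j), the identity
          phi(h) * lam = lam * phi(g) + e tau^j.
   3. Right multiplication by lam (a <> 0, k > 0) never produces a nonzero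
      monomial: if d * lam = c tau^j then d = 0 (compare lowest and highest
      coefficients of d).
   4. Hence psi is an isogeny target iff psi = phi(h) and e = 0; phi(h) is a
      Drinfeld module, and the condition of the proposition is -e/(a a^(q^j)). *)

Section TwistedProduct.
Context {L : fieldType} {q : nat}.
Hypothesis hq : char_prime_power L q.

Local Notation "f ** g" := (skew_mul q f g) (at level 40, left associativity).

Lemma q_gt0 : (0 < q)%N.
Proof. by case: hq => p [e [pp _ _ ->]]; rewrite expn_gt0 prime_gt0. Qed.

(* Every power q^i is a power of the characteristic, so x |-> x^(q^i) is an
   iterated Frobenius map, hence additive. *)
Lemma pnat_qpow (i : nat) : [pchar L].-nat (q ^ i)%N.
Proof.
case: hq => p [e [pp pcp _ ->]]; rewrite -expnM pnatX.
by rewrite (eq_pnat _ (pcharf_eq pcp)) pnat_id.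
Qed.

Lemma frobeniusD (i : nat) (x y : L) :
  (x + y) ^+ (q ^ i) = x ^+ (q ^ i) + y ^+ (q ^ i).
Proof. exact: exprDn_pchar (pnat_qpow i). Qed.

Lemma frobeniusN (i : nat) (x : L) : (- x) ^+ (q ^ i) = - x ^+ (q ^ i).
Proof. exact: exprNn_pchar (pnat_qpow i). Qed.

Lemma frobenius0 (i : nat) : (0 : L) ^+ (q ^ i) = 0.
Proof. by rewrite expr0n expn_eq0 eqn0Ngt q_gt0. Qed.

Lemma coef_skew_mul (f g : {poly L}) (m : nat) :
  (f ** g)`_m = \sum_(i < m.+1) f`_i * g`_(m - i) ^+ (q ^ i).
Proof.
rewrite /skew_mul coef_poly; case: ltnP => // Hm.
symmetry; apply: big1 => i _.
case: (ltnP i (size f)) => Hi; last by rewrite (nth_default 0 Hi) mul0r.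
have Hs : (size g <= m - i)%N by move: Hm Hi; move: (nat_of_ord i) => ii; lia.
by rewrite (nth_default 0 Hs) frobenius0 mulr0.
Qed.

Lemma skew_mulDl (f g h : {poly L}) : (f + g) ** h = f ** h + g ** h.
Proof.
apply/polyP => m; rewrite coefD !coef_skew_mul -big_split /=.
by apply: eq_bigr => i _; rewrite coefD mulrDl.
Qed.

Lemma skew_mulNl (f h : {poly L}) : (- f) ** h = - (f ** h).
Proof.
apply/polyP => m; rewrite coefN !coef_skew_mul -sumrN.
by apply: eq_bigr => i _; rewrite coefN mulNr.
Qed.

Lemma skew_mulBl (f g h : {poly L}) : (f - g) ** h = f ** h - g ** h.
Proof. by rewrite skew_mulDl skew_mulNl. Qed.

Lemma skew_mulDr (f g h : {poly L}) : f ** (g + h) = f ** g + f ** h.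
Proof.
apply/polyP => m; rewrite coefD !coef_skew_mul -big_split /=.
by apply: eq_bigr => i _; rewrite coefD frobeniusD mulrDr.
Qed.

Lemma skew_mulNr (f h : {poly L}) : f ** (- h) = - (f ** h).
Proof.
apply/polyP => m; rewrite coefN !coef_skew_mul -sumrN.
by apply: eq_bigr => i _; rewrite coefN frobeniusN mulrN.
Qed.

Lemma coef_skew_mulZX (f : {poly L}) (c : L) (l m : nat) :
  (f ** (c *: 'X^l))`_m =
    if (l <= m)%N then f`_(m - l) * c ^+ (q ^ (m - l)) else 0.
Proof.
rewrite coef_skew_mul.
have term (i : 'I_m.+1) : f`_i * (c *: 'X^l)`_(m - i) ^+ (q ^ i) =
    if (l <= m)%N && (i == (m - l)%N :> nat) then f`_i * c ^+ (q ^ i) else 0.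
  rewrite coefZ coefXn; have := ltn_ord i.
  case: (eqVneq (m - i)%N l) => [<-|Hl] Hi.
    by rewrite leq_subr subKn // eqxx mulr1.
  rewrite mulr0 frobenius0 mulr0; case: ifP => // /andP [Hlm /eqP Ei].
  by case/eqP: Hl; lia.
rewrite (eq_bigr _ (fun i _ => term i)) -big_mkcond /=.
case: leqP => Hlm /=; last by rewrite big_pred0.
have Hord : (m - l < m.+1)%N by lia.
by rewrite (big_pred1 (Ordinal Hord)) // => i; rewrite -val_eqE.
Qed.

Lemma skew_mulZX (c d : L) (i l : nat) :
  (c *: 'X^i) ** (d *: 'X^l) = (c * d ^+ (q ^ i)) *: 'X^(i + l).
Proof.
apply/polyP => m; rewrite coef_skew_mulZX !coefZ !coefXn.
have [Hlm|Hml] := leqP l m; last first.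
  by rewrite (_ : (m == i + l)%N = false) ?mulr0 //; apply/eqP; lia.
case: (eqVneq (m - l)%N i) => [<-|Hi]; first by rewrite subnK // eqxx !mulr1.
by rewrite (_ : (m == i + l)%N = false) ?mulr0 ?mul0r //; apply/eqP; lia.
Qed.

Lemma lam_intertwining_defect (j k : nat) (g a : L) :
  let h := - a ^+ (q ^ (j + k)) + a + g ^+ (q ^ k) in
  (- 'X^(j + k) + h *: 'X^j + 1) ** ('X^k - a%:P) =
  ('X^k - a%:P) ** (- 'X^(j + k) + g *: 'X^j + 1)
    + (a * g - h * a ^+ (q ^ j)) *: 'X^j.
Proof.
move=> h.
have monomials (y : L) : - 'X^(j + k) + y *: 'X^j + 1 =
    (-1) *: 'X^(j + k) + y *: 'X^j + 1 *: 'X^0.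
  by rewrite scaleN1r expr0 scale1r.
have -> : 'X^k - a%:P = 1 *: 'X^k + (- a) *: 'X^0.
  by rewrite scale1r expr0 scaleNr alg_polyC.
rewrite !monomials !(skew_mulDl, skew_mulDr) !skew_mulZX !frobeniusN !expr1n.
rewrite -!mul_polyC !addn0 !add0n !exprD /h.
ring.
Qed.

Lemma coef_skew_mul_lam (d : {poly L}) (k m : nat) (a : L) :
  (d ** ('X^k - a%:P))`_m =
    (if (k <= m)%N then d`_(m - k) else 0) - d`_m * a ^+ (q ^ m).
Proof.
have -> : 'X^k - a%:P = 1 *: 'X^k - a *: 'X^0 by rewrite scale1r expr0 alg_polyC.
by rewrite skew_mulDr skew_mulNr coefB !coef_skew_mulZX expr1n mulr1 subn0.
Qed.

(* Step 3: d * lam is never a nonzero monomial.  Below j the coefficients of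
   d vanish by induction; the top coefficient of d reappears at degree
   deg d + k, which therefore cannot be j. *)
Lemma skew_mul_lam_monomial (d : {poly L}) (k j : nat) (a c : L) :
  a != 0 -> (0 < k)%N -> d ** ('X^k - a%:P) = c *: 'X^j -> d = 0.
Proof.
move=> a0 k0 E.
have coefE m : (if (k <= m)%N then d`_(m - k) else 0) - d`_m * a ^+ (q ^ m)
    = c * (m == j)%:R.
  by rewrite -coef_skew_mul_lam E coefZ coefXn.
have low m : (m < j)%N -> d`_m = 0.
  elim/ltn_ind: m => m IH mj; have := coefE m.
  rewrite (_ : (m == j) = false) ?mulr0; last by apply/eqP; lia.
  rewrite (_ : (if _ then _ else _) = 0); last by case: leqP => // km; apply: IH; lia.
  by move/eqP; rewrite sub0r oppr_eq0 mulf_eq0 expf_eq0 (negbTE a0) andbF orbF => /eqP.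
apply/eqP; apply: contraT => dn0; set t := (size d).-1.
have lc : d`_t != 0 by rewrite -lead_coefE lead_coef_eq0.
have := coefE (t + k)%N; rewrite leq_addl addnK.
rewrite (nth_default 0 (_ : size d <= t + k)%N) ?mul0r ?subr0; last by rewrite /t; lia.
have [tj|jt] := ltnP t j; first by rewrite (low t tj) eqxx in lc.
rewrite (_ : (t + k == j)%N = false) ?mulr0; last by apply/eqP; lia.
by move=> dt0; rewrite dt0 eqxx in lc.
Qed.

Lemma isogeny_from_standard_iff (j k : nat) (g a : L) (psiT : {poly L}) :
  a != 0 -> (0 < k)%N ->
  let h := - a ^+ (q ^ (j + k)) + a + g ^+ (q ^ k) in
  isogeny q (- 'X^(j + k) + g *: 'X^j + 1) psiT ('X^k - a%:P) <->
  psiT = - 'X^(j + k) + h *: 'X^j + 1 /\ a * g - h * a ^+ (q ^ j) = 0.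
Proof.
move=> a0 k0 h; move: (lam_intertwining_defect j k g a) => /= key.
rewrite -/h in key; set psi0 := - 'X^(j + k) + h *: 'X^j + 1 in key *.
set e := a * g - h * a ^+ (q ^ j) in key *.
rewrite /isogeny; split => [iso | [-> e0]]; last by rewrite key e0 scale0r addr0.
have defect : (psiT - psi0) ** ('X^k - a%:P) = (- e) *: 'X^j.
  by rewrite skew_mulBl -iso key scaleNr opprD addNKr.
have psi_eq : psiT = psi0.
  by apply/eqP; rewrite -subr_eq0; apply/eqP; apply: skew_mul_lam_monomial a0 k0 defect.
split=> //; move: iso; rewrite psi_eq key => /eqP.
rewrite -subr_eq0 opprD addrA subrr sub0r oppr_eq0.
by move=> /eqP /(congr1 (fun p : {poly L} => p`_j)); rewrite coefZ coefXn eqxx mulr1 coef0.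
Qed.

End TwistedProduct.

(* -tau^n + y tau^j + 1 with 0 < j < n defines a Drinfeld module of
   characteristic T - 1: its constant term is 1 and its tau^n-coefficient -1. *)
Lemma drinfeld_T_standard (L : fieldType) (n j : nat) (y : L) :
  (0 < j)%N -> (j < n)%N -> drinfeld_T (- 'X^n + y *: 'X^j + 1).
Proof.
move=> j0 jn; have coefE l : (- 'X^n + y *: 'X^j + 1 : {poly L})`_l =
    - (l == n)%:R + y * (l == j)%:R + (l == 0)%N%:R.
  by rewrite !coefD coefN coefZ !coefXn coef1.
have n0 : (n == 0)%N = false by apply/eqP; lia.
have j0' : (j == 0)%N = false by apply/eqP; lia.
have nj : (n == j) = false by apply/eqP; lia.
split; first by rewrite /skewD coefE eq_sym n0 eq_sym j0' mulr0 oppr0 !add0r.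
move/(congr1 (fun p : {poly L} => p`_n)); rewrite coefE coef1 eqxx n0 nj mulr0 !addr0.
by move/eqP; rewrite oppr_eq0 oner_eq0.
Qed.

(* The condition of the proposition, with N = q^n, b = a^(q^j), x = g^(q^k),
   is the defect e = a g - h b divided by -(a b). *)
Lemma condition_as_defect (F : fieldType) (N : nat) (a b g x : F) :
  a != 0 -> b != 0 -> (0 < N)%N ->
  x / a - g / b - a ^+ (N - 1) + 1 = - (a * g - (- a ^+ N + a + x) * b) / (a * b).
Proof. by move=> a0 b0 N0; rewrite (exprB N0) ?unitfE // expr1; field; rewrite a0 b0. Qed.

Theorem proposition4p1 (L : fieldType) (q : nat)
  (hq : char_prime_power L q) (hFq : contains_Fq L q)
  (n j k : nat) (hj1 : (1 <= j)%N) (hjn : (j < n)%N) (hcop : coprime n j)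
  (hk : k = (n - j)%N) (g a : L) (ha : a != 0) :
  let phiT : {poly L} := - 'X^n + g *: 'X^j + 1 in
  let lam : {poly L} := 'X^k - a%:P in
  ((exists psiT : {poly L}, drinfeld_T psiT /\ isogeny q phiT psiT lam) <->
     g ^+ (q ^ k) / a - g / a ^+ (q ^ j) - a ^+ (q ^ n - 1) + 1 = 0)
  /\ (forall psiT : {poly L}, drinfeld_T psiT -> isogeny q phiT psiT lam ->
        psiT = - 'X^n + (- a ^+ (q ^ n) + a + g ^+ (q ^ k)) *: 'X^j + 1).
Proof.
move=> phiT lam; have k0 : (0 < k)%N by lia.
have hn : n = (j + k)%N by lia.
subst n; have iso_iff psiT := isogeny_from_standard_iff hq j k g a psiT ha k0.
have aqj : a ^+ (q ^ j) != 0 by rewrite expf_neq0.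
have qn0 : (0 < q ^ (j + k))%N by rewrite expn_gt0 (q_gt0 hq).
rewrite condition_as_defect //.
split; last by move=> psiT _ /iso_iff [].
split => [[psiT [_ /iso_iff [_ ->]]] | cond]; first by rewrite oppr0 mul0r.
exists (- 'X^(j + k) + (- a ^+ (q ^ (j + k)) + a + g ^+ (q ^ k)) *: 'X^j + 1).
split; first exact: drinfeld_T_standard.
apply/iso_iff; split => //; move/eqP: cond.
by rewrite mulf_eq0 invr_eq0 mulf_eq0 (negbTE ha) (negbTE aqj) !orbF oppr_eq0 => /eqP.
Qed.
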